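(* Consider the multi-market oligopoly of equal capacity $\mathcal{G}$ described in the context, and suppose: each $u_x$ ($x\in E$) is concave and differentiable; $c$ is convex and differentiable; and at least one of the following holds: (a) all but at most one of the $u_x$ are strictly concave, or (b) $c$ is strictly convex. Then $\mathcal{G}$ has a pure-strategy Nash equilibrium, and every pure-strategy Nash equilibrium of $\mathcal{G}$ is strict.
   Context: Let $N=\{1,\dots,n\}$ be a set of firms (players) and $E=\{1,\dots,m\}$ a set of markets. Let $\Delta^{m-1}=\{\mathbf{v}\in\mathbb{R}^m:\mathbf{v}\ge 0,\ \mathbf{v}^{T}\mathbf{1}=1\}$. Each firm $i$ chooses a strategy $\mathbf{s}_i=(s_{ix})_{x=1}^m\in S_i=\Delta^{m-1}$. For each market $x$ let $u_x:\mathbb{R}_{\ge 0}\to\mathbb{R}_{\ge 0}$ with $u_x(0)=0$, and let $p_x(t)=u_x(t)/t$ for $t>0$. Let $c:\Delta^{m-1}\to\mathbb{R}_{\ge 0}$ be a common cost function. For a strategy profile $\mathbf{S}=(\mathbf{s}_i)_{i=1}^n$ put $s_x=\sum_{i=1}^n s_{ix}$ and $\mathbf{s}_{-i}=\sum_{j\ne i}\mathbf{s}_j$. The payoff of player $i$ is $u_i(\mathbf{s}_i;\mathbf{s}_{-i})=\sum_{x=1}^m p_x(s_x)s_{ix}-c(\mathbf{s}_i)$ (a term with $s_x=0$ is taken to be $0$). The game is $\mathcal{G}=(N,S,(u_i)_{i=1}^n)$ with $S=\prod_{i=1}^n\Delta^{m-1}$. A Nash equilibrium is strict if each player's equilibrium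 strategy is its unique best response to the others' equilibrium strategies. *)

From HB Require Import structures.
From mathcomp Require Import all_boot all_order all_algebra.
From mathcomp Require Import all_classical all_reals all_analysis.
Set Implicit Arguments. Unset Strict Implicit. Unset Printing Implicit Defensive.
Import Order.TTheory GRing.Theory Num.Theory.
Import numFieldNormedType.Exports.
Local Open Scope classical_set_scope.
Local Open Scope ring_scope.

Section Oligopoly.
Variables (R : realType) (n m : nat).

Definition simplex : set 'rV[R]_m :=
  [set v | (forall x : 'I_m, 0 <= v ord0 x) /\ \sum_(x < m) v ord0 x = 1].

Definition profile := 'I_n -> 'rV[R]_m.

Definition is_profile (S : profile) : Prop := forall i, simplex (S i).

Definition load (S : profile) (x : 'I_m) : R := \sum_(i < n) S i ord0 x.

Definition price (ux : R -> R) (t : R) : R := ux t / t.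

Definition payoff (u : 'I_m -> R -> R) (c : 'rV[R]_m -> R) (S : profile)
    (i : 'I_n) : R :=
  \sum_(x < m) (if load S x == 0 then 0 else price (u x) (load S x) * S i ord0 x)
  - c (S i).

Definition deviate (S : profile) (i : 'I_n) (s : 'rV[R]_m) : profile :=
  fun j => if j == i then s else S j.

Definition is_best_response u c (S : profile) (i : 'I_n) (s : 'rV[R]_m) : Prop :=
  simplex s /\
  forall s', simplex s' -> payoff u c (deviate S i s') i <= payoff u c (deviate S i s) i.

Definition is_nash u c (S : profile) : Prop :=
  is_profile S /\ forall i, is_best_response u c S i (S i).

Definition is_strict_nash u c (S : profile) : Prop :=
  is_nash u c S /\
  forall i s, is_best_response u c S i s -> s = S i.

End Oligopoly.

Definition nonneg_half {R : realType} : set R := [set t | 0 <= t].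

Definition concave_on {R : realType} (D : set R) (f : R -> R) : Prop :=
  forall a b t, D a -> D b -> 0 <= t <= 1 ->
    t * f a + (1 - t) * f b <= f (t * a + (1 - t) * b).

Definition strictly_concave_on {R : realType} (D : set R) (f : R -> R) : Prop :=
  forall a b t, D a -> D b -> a != b -> 0 < t < 1 ->
    t * f a + (1 - t) * f b < f (t * a + (1 - t) * b).

Definition convex_on_rV {R : realType} {m : nat} (D : set 'rV[R]_m)
    (f : 'rV[R]_m -> R) : Prop :=
  forall v w t, D v -> D w -> 0 <= t <= 1 ->
    f (t *: v + (1 - t) *: w) <= t * f v + (1 - t) * f w.

Definition strictly_convex_on_rV {R : realType} {m : nat} (D : set 'rV[R]_m)
    (f : 'rV[R]_m -> R) : Prop :=
  forall v w t, D v -> D w -> v != w -> 0 < t < 1 ->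
    f (t *: v + (1 - t) *: w) < t * f v + (1 - t) * f w.

Definition differentiable_on_nonneg {R : realType} (f : R -> R) : Prop :=
  (forall t : R, 0 < t -> derivable f t 1) /\
  (exists l : R, (fun h : R => h^-1 * (f h - f 0)) @ 0^'+ --> l).

From HB Require Import structures.
From mathcomp Require Import all_boot all_order all_algebra.
From mathcomp Require Import all_classical all_reals all_analysis.
From mathcomp Require Import ring lra.
Import Order.TTheory GRing.Theory Num.Theory.
Import numFieldNormedType.Exports.
Local Open Scope classical_set_scope.
Local Open Scope ring_scope.

(* Firm i's payoff is concave in its own strategy.  In a market where the
   others supply a, the revenue t |-> u(a+t) t/(a+t) lies below
   t |-> u'(s) t + (u(s) - u'(s) s) t/(a+t), with equality at a + t = s; this
   majorant is concave since t/(a+t) is concave and u(s) - u'(s) s >= 0 by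
   concavity and u(0) = 0.  Under (a) or (b) the payoff is even strictly
   concave, so the midpoint of two distinct best responses would do strictly
   better: every equilibrium is strict.

   For existence, let p be the price extended continuously to 0, N = n and
     phi(y) = (N y p(N y) + (N - 1) int_0^(N y) p) / N^2.
   Then phi'(y) = p(N y) + y p'(N y) is a firm's marginal revenue when all N
   firms supply y, so Phi(v) = sum_x phi_x(v_x) - c(v) has the same one-sided
   directional derivatives at v as a firm's payoff at the symmetric profile v.
   A maximiser of Phi on the compact simplex thus satisfies every firm's
   first-order condition, which suffices by concavity. *)

Section RealCalculus.
Context {R : realType}.
Implicit Types (f : R -> R) (s d : R).

Lemma derivable_rquot_cvg [f s] d : derivable f s 1 ->
  (fun h => h^-1 * (f (s + h * d) - f s)) @ 0^'+ --> d * derive1 f s.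
Proof.
move=> df; apply: cvg_dnbhs_at_right.
have dfs : differentiable f s by apply/derivable1_diffP.
have -> : d * derive1 f s = 'D_d f s by rewrite deriveE // diff1E.
suff -> : (fun h => h^-1 * (f (s + h * d) - f s)) =
          (fun h => h^-1 *: ((f \o shift s) (h *: d) - f s)).
  exact: diff_derivable.
by apply/funext => h /=; rewrite [_ + s]addrC.
Qed.

Lemma concave_le_tangent [f s0] s : concave_on nonneg_half f -> 0 < s0 ->
  derivable f s0 1 -> 0 <= s -> f s <= f s0 + derive1 f s0 * (s - s0).
Proof.
move=> fc s0_gt0 df s_ge0; rewrite -lerBlDl mulrC.
apply: (cvgr_to_ge (derivable_rquot_cvg (s - s0) df)).
near=> h.
have h_gt0 : 0 < h by near: h; apply: nbhs_right_gt.
have h_le1 : h <= 1 by near: h; apply: nbhs_right_le.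
have := fc s s0 h s_ge0 (ltW s0_gt0); rewrite h_le1 ltW // => /(_ isT).
rewrite (_ : h * s + (1 - h) * s0 = s0 + h * (s - s0)); last by ring.
by rewrite ler_pdivlMl //; lra.
Unshelve. all: by end_near.
Qed.

Lemma concave_lt_tangent [f s0 s] : concave_on nonneg_half f ->
  strictly_concave_on nonneg_half f -> 0 < s0 -> derivable f s0 1 ->
  0 <= s -> s != s0 -> f s < f s0 + derive1 f s0 * (s - s0).
Proof.
move=> fc fsc s0_gt0 df s_ge0 s_neq.
have half01 : 0 < (2^-1 : R) < 1 by rewrite invr_gt0 invf_lt1 ?ltr0n ?ltr1n.
have mid_ge0 : 0 <= 2^-1 * s + (1 - 2^-1) * s0.
  have /andP[h_gt0 h_lt1] := half01.
  by rewrite addr_ge0 // mulr_ge0 // ?subr_ge0 ltW.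
have := concave_le_tangent _ fc s0_gt0 df mid_ge0.
have := fsc s s0 2^-1 s_ge0 (ltW s0_gt0) s_neq half01.
set mid := f _; lra.
Qed.

Lemma concave_tangent_intercept_ge0 [f s0] : f 0 = 0 -> concave_on nonneg_half f ->
  0 < s0 -> derivable f s0 1 -> 0 <= f s0 - derive1 f s0 * s0.
Proof.
move=> f0 fc s0_gt0 df.
by have := concave_le_tangent 0 fc s0_gt0 df (lexx 0); rewrite f0; lra.
Qed.

Lemma cvgMl_neq0 (T : Type) (F : set_system T) {FF : Filter F} (g : T -> R) (y l : R) :
  (y != 0 -> g @ F --> l) -> (fun t => y * g t) @ F --> y * l.
Proof.
move=> gl; have [->|y_neq0] := eqVneq y 0; last exact: cvgMl_tmp (gl y_neq0).
by rewrite mul0r; under eq_fun do rewrite mul0r; exact: cvg_cst.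
Qed.

End RealCalculus.

Section Revenue.
Context {R : realType}.
Implicit Types (a t : R).

Definition share a t : R := t / (a + t).

Lemma share_ge0 [a t] : 0 <= a -> 0 <= t -> 0 <= share a t.
Proof. by move=> a_ge0 t_ge0; rewrite divr_ge0 // addr_ge0. Qed.

Lemma share_le1 [a t] : 0 <= a -> 0 <= t -> share a t <= 1.
Proof.
move=> a_ge0 t_ge0; rewrite /share.
have [->|at_neq0] := eqVneq (a + t) 0; first by rewrite invr0 mulr0.
have at_gt0 : 0 < a + t by rewrite lt_neqAle eq_sym at_neq0 addr_ge0.
by rewrite ler_pdivrMr // mul1r lerDr.
Qed.

Lemma share_concave [a t1 t2 l] : 0 <= a -> 0 <= t1 -> 0 <= t2 -> 0 <= l <= 1 ->
  0 < a + (l * t1 + (1 - l) * t2) ->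
  l * share a t1 + (1 - l) * share a t2 <= share a (l * t1 + (1 - l) * t2).
Proof.
move=> a_ge0 t1_ge0 t2_ge0 /andP[l_ge0 l_le1] atl_gt0.
have [a0|a_neq0] := eqVneq a 0.
  rewrite a0 /share add0r in atl_gt0 *; rewrite divff ?gt_eqF //.
  have := share_le1 (lexx 0) t1_ge0; have := share_le1 (lexx 0) t2_ge0.
  rewrite /share !add0r; nra.
have a_gt0 : 0 < a by rewrite lt_neqAle eq_sym a_neq0.
have at1_gt0 : 0 < a + t1 by rewrite ltr_pwDl.
have at2_gt0 : 0 < a + t2 by rewrite ltr_pwDl.
rewrite -subr_ge0 (_ : _ - _ = a * (l * (1 - l)) * (t1 - t2) ^+ 2 /
    ((a + t1) * (a + t2) * (a + (l * t1 + (1 - l) * t2)))).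
  apply: divr_ge0; last by rewrite ltW // !mulr_gt0.
  by rewrite mulr_ge0 ?sqr_ge0 // !mulr_ge0 // subr_ge0.
by rewrite /share; field; rewrite !gt_eqF.
Qed.

Definition revenue (u : R -> R) a t : R :=
  if a + t == 0 then 0 else price u (a + t) * t.

Lemma revenueE u a t : a + t != 0 -> revenue u a t = u (a + t) * share a t.
Proof.
by move=> at_neq0; rewrite /revenue (negbTE at_neq0) /price /share -mulrA [_^-1 * t]mulrC.
Qed.

Lemma mulr_revenue_eq0 u a t k : k * t = 0 -> k * revenue u a t = 0.
Proof. by move=> kt0; rewrite /revenue; case: ifP; rewrite ?mulr0 // mulrCA kt0 mulr0. Qed.

Variable u : R -> R.
Hypothesis u0 : u 0 = 0.
Hypothesis u_concave : concave_on nonneg_half u.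
Hypothesis u_derivable : forall s, 0 < s -> derivable u s 1.

Definition revenue_majorant s0 a t : R :=
  derive1 u s0 * t + (u s0 - derive1 u s0 * s0) * share a t.

Lemma revenue_majorantE s0 a t : 0 < a + t ->
  revenue_majorant s0 a t = (u s0 + derive1 u s0 * (a + t - s0)) * share a t.
Proof. by move=> at_gt0; rewrite /revenue_majorant /share; field; rewrite gt_eqF. Qed.

Lemma revenue_le_majorant s0 a t : 0 <= a -> 0 <= t -> 0 < s0 ->
  revenue u a t <= revenue_majorant s0 a t.
Proof.
move=> a_ge0 t_ge0 s0_gt0.
have [at0|at_neq0] := eqVneq (a + t) 0.
  have t0 : t = 0 by lra.
  by rewrite /revenue /revenue_majorant /share at0 eqxx t0 mul0r !mulr0 addr0.
have at_gt0 : 0 < a + t by rewrite lt_neqAle eq_sym at_neq0 addr_ge0.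
rewrite revenueE // revenue_majorantE //; apply: ler_wpM2r; first exact: share_ge0.
exact: concave_le_tangent (u_derivable _ s0_gt0) (ltW at_gt0).
Qed.

Lemma revenue_lt_majorant s0 a t : strictly_concave_on nonneg_half u ->
  0 <= a -> 0 < t -> 0 < s0 -> a + t != s0 ->
  revenue u a t < revenue_majorant s0 a t.
Proof.
move=> u_sconcave a_ge0 t_gt0 s0_gt0 at_neq.
have at_gt0 : 0 < a + t by rewrite ltr_pwDr.
rewrite revenueE ?gt_eqF // revenue_majorantE // ltr_pM2r ?divr_gt0 //.
exact: concave_lt_tangent (u_derivable _ s0_gt0) (ltW at_gt0) at_neq.
Qed.

Lemma revenue_majorant_eq a t : 0 < a + t -> revenue u a t = revenue_majorant (a + t) a t.
Proof.
by move=> at_gt0; rewrite revenueE ?gt_eqF // revenue_majorantE // subrr mulr0 addr0.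
Qed.

Lemma revenue_majorant_concave [s0 a t1 t2 l] : 0 <= a -> 0 <= t1 -> 0 <= t2 ->
  0 <= l <= 1 -> 0 < s0 -> 0 < a + (l * t1 + (1 - l) * t2) ->
  l * revenue_majorant s0 a t1 + (1 - l) * revenue_majorant s0 a t2 <=
  revenue_majorant s0 a (l * t1 + (1 - l) * t2).
Proof.
move=> a_ge0 t1_ge0 t2_ge0 l01 s0_gt0 atl_gt0.
have := share_concave a_ge0 t1_ge0 t2_ge0 l01 atl_gt0.
have := concave_tangent_intercept_ge0 u0 u_concave s0_gt0 (u_derivable _ s0_gt0).
rewrite /revenue_majorant; set D := derive1 u s0; set b := u s0 - D * s0.
move=> b_ge0 /(ler_wpM2l b_ge0); lra.
Qed.

Lemma revenue_concave a t1 t2 l : 0 <= a -> 0 <= t1 -> 0 <= t2 -> 0 <= l <= 1 ->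
  l * revenue u a t1 + (1 - l) * revenue u a t2 <=
  revenue u a (l * t1 + (1 - l) * t2).
Proof.
move=> a_ge0 t1_ge0 t2_ge0 l01; have /andP[l_ge0 l_le1] := l01.
set tl := l * t1 + (1 - l) * t2.
have lt1_ge0 : 0 <= l * t1 by rewrite mulr_ge0.
have lt2_ge0 : 0 <= (1 - l) * t2 by rewrite mulr_ge0 // subr_ge0.
have [atl0|atl_neq0] := eqVneq (a + tl) 0.
  move/eqP: (atl0); rewrite paddr_eq0 ?addr_ge0 // => /andP[_].
  rewrite paddr_eq0 // => /andP[/eqP lt1 /eqP lt2].
  by rewrite !mulr_revenue_eq0 // addr0 /revenue atl0 eqxx.
have atl_gt0 : 0 < a + tl by rewrite lt_neqAle eq_sym atl_neq0 !addr_ge0.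
rewrite [revenue u a tl]revenue_majorant_eq //.
apply: (le_trans _ (revenue_majorant_concave a_ge0 t1_ge0 t2_ge0 l01 atl_gt0 atl_gt0)).
by apply: lerD; apply: ler_wpM2l; rewrite ?subr_ge0 // revenue_le_majorant.
Qed.

Lemma revenue_strictly_concave a t1 t2 l : strictly_concave_on nonneg_half u ->
  0 <= a -> 0 <= t1 -> 0 <= t2 -> t1 != t2 -> 0 < l < 1 ->
  l * revenue u a t1 + (1 - l) * revenue u a t2 <
  revenue u a (l * t1 + (1 - l) * t2).
Proof.
move=> u_sconcave a_ge0 t1_ge0 t2_ge0 t12 /andP[l_gt0 l_lt1].
have l01 : 0 <= l <= 1 by rewrite !ltW.
have l'_gt0 : 0 < 1 - l by rewrite subr_gt0.
set tl := l * t1 + (1 - l) * t2.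
have t12_gt0 : 0 < t1 \/ 0 < t2.
  rewrite !lt_neqAle t1_ge0 t2_ge0 !andbT; apply/orP; apply: contraNT t12.
  by rewrite negb_or !negbK => /andP[/eqP<- /eqP<-].
have atl_gt0 : 0 < a + tl by apply: ltr_pwDr a_ge0; case: t12_gt0; rewrite /tl; nra.
have neq_tl t : t != tl -> a + t != a + tl by apply: contra => /eqP/addrI ->.
rewrite [revenue u a tl]revenue_majorant_eq //.
apply: (lt_le_trans _ (revenue_majorant_concave a_ge0 t1_ge0 t2_ge0 l01 atl_gt0 atl_gt0)).
have le_maj t : 0 <= t -> revenue u a t <= revenue_majorant (a + tl) a t.
  by move=> t_ge0; apply: revenue_le_majorant.
have lt_maj t : 0 < t -> t != tl -> revenue u a t < revenue_majorant (a + tl) a t.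
  by move=> t_gt0 t_neq; apply: revenue_lt_majorant => //; exact: neq_tl.
have [t1_gt0|t2_gt0] := t12_gt0.
  apply: ltr_leD; last by apply: ler_wpM2l; [exact: ltW | exact: le_maj].
  rewrite ltr_pM2l // lt_maj //.
  by rewrite /tl; apply: contra t12 => /eqP; nra.
apply: ler_ltD; first by apply: ler_wpM2l; [exact: ltW | exact: le_maj].
rewrite ltr_pM2l // lt_maj //.
by rewrite /tl; apply: contra t12 => /eqP; nra.
Qed.

End Revenue.

Section Potential.
Context {R : realType}.
Variable u : R -> R.
Hypothesis u0 : u 0 = 0.
Hypothesis u_derivable : forall s, 0 < s -> derivable u s 1.
Hypothesis u_rderivable0 :
  exists l : R, (fun h : R => h^-1 * (u h - u 0)) @ 0^'+ --> l.

(* Since [u 0 = 0], the price [u t / t] tends to the right derivative of [u]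
   at [0]; [price_ext] is the price extended continuously to all of [R]. *)
Definition price_ext (t : R) : R :=
  if 0 < t then price u t else lim ((fun h : R => h^-1 * (u h - u 0)) @ 0^'+).

Lemma price_ext_derivable [s] : 0 < s -> derivable price_ext s 1.
Proof.
move=> s_gt0.
have du : derivable (fun t => u t * t^-1) s 1.
  by apply: derivableM; [exact: u_derivable | apply: derivableV; rewrite ?gt_eqF].
apply: (near_eq_derivable _ du); near=> t; rewrite /price_ext /price ifT //.
by near: t; exact: lt_nbhsr.
Unshelve. all: by end_near.
Qed.

Lemma price_ext_continuous : continuous price_ext.
Proof.
move=> s; have [s_gt0|s_lt0|<-] := ltgtP 0 s.
- exact/differentiable_continuous/derivable1_diffP/price_ext_derivable.
- rewrite /continuous_at {2}/price_ext ltNge ltW //=.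
  apply: cvg_near_cst; near=> t; rewrite /price_ext ltNge ltW //.
  by near: t; exact: lt_nbhsl.
- apply/left_right_continuousP; split; rewrite {2}/price_ext ltxx.
    apply: cvg_near_cst; near=> t; rewrite /price_ext ltNge ltW //.
  have [l ul] := u_rderivable0; rewrite (cvg_lim _ ul) //.
  apply: cvg_trans ul; apply: near_eq_cvg; near=> t.
  have t_gt0 : 0 < t by near: t; exact: nbhs_right_gt.
  by rewrite /price_ext t_gt0 /price u0 subr0 mulrC.
Unshelve. all: by end_near.
Qed.

Lemma price_ext_shift_cvg s d :
  (fun h => price_ext (s + h * d)) @ 0^'+ --> price_ext s.
Proof.
apply: (continuous_cvg _ (price_ext_continuous s)).
suff : (fun h : R => s + h * d) @ 0^'+ --> s + 0 * d by rewrite mul0r addr0.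
apply: cvgD; first exact: cvg_cst.
by apply: cvgMr_tmp; apply: cvg_at_right_filter; exact: cvg_id.
Qed.

Lemma revenue_price_ext a t : 0 <= a -> 0 <= t -> revenue u a t = t * price_ext (a + t).
Proof.
move=> a_ge0 t_ge0; have [at0|at_neq0] := eqVneq (a + t) 0.
  have t0 : t = 0 by lra.
  by rewrite /revenue at0 eqxx t0 mul0r.
have at_gt0 : 0 < a + t by rewrite lt_neqAle eq_sym at_neq0 addr_ge0.
by rewrite /revenue (negbTE at_neq0) /price_ext at_gt0 mulrC.
Qed.

(* The lower bound [-1] only needs to be negative, so that [0] is interior. *)
Definition cum_price (s : R) : R :=
  \int[@lebesgue_measure R]_(t in `[-1, s]) price_ext t.

Lemma cum_price_derive [s] : -1 < s ->
  derivable cum_price s 1 /\ derive1 cum_price s = price_ext s.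
Proof.
move=> s_gtN1; have s_lt : s < s + 1 by rewrite ltrDl.
apply: (continuous_FTC1_closed s_lt) => //; last exact: price_ext_continuous.
apply: continuous_compact_integrable; first exact: segment_compact.
exact/continuous_subspaceT/price_ext_continuous.
Qed.

Definition potential (N y : R) : R :=
  (N * y * price_ext (N * y) + (N - 1) * cum_price (N * y)) / (N * N).

Lemma potential_continuous N y : 0 < N -> 0 <= y -> {for y, continuous (potential N)}.
Proof.
move=> N_gt0 y_ge0.
have Ny_cvg : (fun z : R => N * z) @ y --> N * y by apply: cvgMl_tmp; exact: cvg_id.
have Ny_gtN1 : -1 < N * y.
  by apply: lt_le_trans (mulr_ge0 (ltW N_gt0) y_ge0); rewrite oppr_lt0.
have cum_cont : {for N * y, continuous cum_price}.
  by apply/differentiable_continuous/derivable1_diffP; case: (cum_price_derive Ny_gtN1).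
apply: cvgMr_tmp; apply: cvgD.
  by apply: cvgM => //; exact: (continuous_cvg _ (price_ext_continuous _) Ny_cvg).
by apply: cvgMl_tmp; exact: (continuous_cvg _ cum_cont Ny_cvg).
Qed.

(* When [y = 0], [s] may be [0], where [derive1 price_ext s] is junk; it is
   multiplied by [0]. *)
Lemma mul_price_ext_rquot_cvg y s d : (y != 0 -> 0 < s) ->
  (fun h => h^-1 * ((y + h * d) * price_ext (s + h * d) - y * price_ext s))
    @ 0^'+ --> d * price_ext s + y * (d * derive1 price_ext s).
Proof.
move=> s_gt0.
have E : \forall h \near 0^'+,
    d * price_ext (s + h * d) + y * (h^-1 * (price_ext (s + h * d) - price_ext s)) =
    h^-1 * ((y + h * d) * price_ext (s + h * d) - y * price_ext s).
  near=> h; have h_gt0 : 0 < h by near: h; exact: nbhs_right_gt.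
  by field; rewrite gt_eqF.
apply: cvg_trans (near_eq_cvg E) _; apply: cvgD.
  exact: cvgMl_tmp (price_ext_shift_cvg _ _).
apply: cvgMl_neq0 => /s_gt0 s_gt0'.
exact: derivable_rquot_cvg (price_ext_derivable s_gt0').
Unshelve. all: by end_near.
Qed.

Lemma revenue_rquot_cvg [N y] d : 1 <= N -> 0 <= y -> 0 <= y + d ->
  (fun h => h^-1 * (revenue u ((N - 1) * y) (y + h * d) - revenue u ((N - 1) * y) y))
    @ 0^'+ --> d * price_ext (N * y) + y * (d * derive1 price_ext (N * y)).
Proof.
move=> N_ge1 y_ge0 yd_ge0.
have a_ge0 : 0 <= (N - 1) * y by rewrite mulr_ge0 // subr_ge0.
have E : \forall h \near 0^'+,
    h^-1 * ((y + h * d) * price_ext (N * y + h * d) - y * price_ext (N * y)) =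
    h^-1 * (revenue u ((N - 1) * y) (y + h * d) - revenue u ((N - 1) * y) y).
  near=> h.
  have h_gt0 : 0 < h by near: h; exact: nbhs_right_gt.
  have h_le1 : h <= 1 by near: h; apply: nbhs_right_le; exact: ltr01.
  have yhd_ge0 : 0 <= y + h * d by nra.
  rewrite !revenue_price_ext // (_ : (N - 1) * y + y = N * y); last by ring.
  by rewrite (_ : (N - 1) * y + (y + h * d) = N * y + h * d); last by ring.
apply: cvg_trans (near_eq_cvg E) _; apply: mul_price_ext_rquot_cvg => y_neq0.
by rewrite mulr_gt0 ?(lt_le_trans ltr01 N_ge1) // lt_neqAle eq_sym y_neq0.
Unshelve. all: by end_near.
Qed.

Lemma potential_rquot_cvg [N y] d : 1 <= N -> 0 <= y ->
  (fun h => h^-1 * (potential N (y + h * d) - potential N y))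
    @ 0^'+ --> d * price_ext (N * y) + y * (d * derive1 price_ext (N * y)).
Proof.
move=> N_ge1 y_ge0; have N_gt0 : 0 < N := lt_le_trans ltr01 N_ge1.
set s := N * y; have s_ge0 : 0 <= s by rewrite mulr_ge0 // ltW.
have E : \forall h \near 0^'+,
    (h^-1 * ((s + h * (N * d)) * price_ext (s + h * (N * d)) - s * price_ext s) +
     (N - 1) * (h^-1 * (cum_price (s + h * (N * d)) - cum_price s))) / (N * N) =
    h^-1 * (potential N (y + h * d) - potential N y).
  near=> h; have h_gt0 : 0 < h by near: h; exact: nbhs_right_gt.
  rewrite /potential (_ : N * (y + h * d) = s + h * (N * d)); last by rewrite /s; ring.
  by rewrite -/s; field; rewrite !gt_eqF.
apply: cvg_trans (near_eq_cvg E) _.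
have [cum_der cum_der_eq] := cum_price_derive (lt_le_trans (ltrN10 R) s_ge0).
have -> : d * price_ext s + y * (d * derive1 price_ext s) =
    ((N * d) * price_ext s + s * ((N * d) * derive1 price_ext s) +
     (N - 1) * ((N * d) * derive1 cum_price s)) / (N * N).
  by rewrite cum_der_eq /s; field; rewrite gt_eqF.
apply: cvgMr_tmp; apply: cvgD.
  by apply: mul_price_ext_rquot_cvg => s_neq0; rewrite lt_neqAle eq_sym s_neq0.
by apply: cvgMl_tmp; exact: derivable_rquot_cvg.
Unshelve. all: by end_near.
Qed.

Lemma revenue_sub_potential_rquot_cvg [N y] d : 1 <= N -> 0 <= y -> 0 <= y + d ->
  (fun h => h^-1 * ((revenue u ((N - 1) * y) (y + h * d) - revenue u ((N - 1) * y) y) -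
                    (potential N (y + h * d) - potential N y))) @ 0^'+ --> 0.
Proof.
move=> N_ge1 y_ge0 yd_ge0.
under eq_fun do rewrite mulrBr.
have := cvgB (revenue_rquot_cvg d N_ge1 y_ge0 yd_ge0) (potential_rquot_cvg d N_ge1 y_ge0).
by rewrite subrr; apply.
Qed.

End Potential.

Section ConcaveRV.
Context {R : realType} {m : nat}.
Implicit Types (D : set 'rV[R]_m) (f g : 'rV[R]_m -> R).

Definition concave_on_rV D f : Prop :=
  forall v w t, D v -> D w -> 0 <= t <= 1 ->
    t * f v + (1 - t) * f w <= f (t *: v + (1 - t) *: w).

Definition strictly_concave_on_rV D f : Prop :=
  forall v w t, D v -> D w -> v != w -> 0 < t < 1 ->
    t * f v + (1 - t) * f w < f (t *: v + (1 - t) *: w).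

Lemma strictly_concave_max_unique [D f v w] :
  (forall v w t, D v -> D w -> 0 <= t <= 1 -> D (t *: v + (1 - t) *: w)) ->
  strictly_concave_on_rV D f -> D v -> D w ->
  (forall z, D z -> f z <= f v) -> (forall z, D z -> f z <= f w) -> v = w.
Proof.
move=> D_convex f_sconcave Dv Dw v_max w_max; apply/eqP/contraT => vw.
have half01 : 0 < (2^-1 : R) < 1 by rewrite invr_gt0 invf_lt1 ?ltr0n ?ltr1n.
have half01W : 0 <= (2^-1 : R) <= 1 by case/andP: half01 => *; rewrite !ltW.
have := f_sconcave v w 2^-1 Dv Dw vw half01.
have := v_max _ (D_convex v w 2^-1 Dv Dw half01W).
by have := v_max w Dw; have := w_max v Dv; lra.
Qed.

Lemma concave_max_first_order [D f g v w] :
  concave_on_rV D f -> D v -> D w ->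
  (forall t, 0 < t <= 1 -> g (t *: w + (1 - t) *: v) <= g v) ->
  (fun t => t^-1 * ((f (t *: w + (1 - t) *: v) - f v) -
                    (g (t *: w + (1 - t) *: v) - g v))) @ 0^'+ --> 0 ->
  f w <= f v.
Proof.
move=> f_concave Dv Dw g_max fg_cvg; rewrite -subr_le0.
apply: (cvgr_to_ge fg_cvg); near=> t.
have t_gt0 : 0 < t by near: t; exact: nbhs_right_gt.
have t_le1 : t <= 1 by near: t; apply: nbhs_right_le; exact: ltr01.
have := f_concave w v t Dw Dv; rewrite ltW // t_le1 => /(_ isT).
have := g_max t; rewrite t_gt0 t_le1 => /(_ isT).
by rewrite ler_pdivlMl //; lra.
Unshelve. all: by end_near.
Qed.

End ConcaveRV.

Section Simplex.
Context {R : realType} {m : nat}.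

Lemma simplex_convex (v w : 'rV[R]_m) t : simplex v -> simplex w ->
  0 <= t <= 1 -> simplex (t *: v + (1 - t) *: w).
Proof.
move=> [v_ge0 v_sum] [w_ge0 w_sum] /andP[t_ge0 t_le1]; split.
  by move=> x; rewrite !mxE addr_ge0 ?mulr_ge0 ?subr_ge0.
under eq_bigr do rewrite !mxE.
by rewrite big_split /= -!mulr_sumr v_sum w_sum !mulr1 addrC subrK.
Qed.

Lemma simplex_closed : closed (@simplex R m).
Proof.
have -> : @simplex R m =
    \bigcap_(x in setT) ((fun v : 'rV[R]_m => v ord0 x) @^-1` [set t | 0 <= t]) `&`
    (fun v : 'rV[R]_m => \sum_(x < m) v ord0 x) @^-1` [set 1].
  apply/seteqP; split => v [v_ge0 v_sum]; split => //= x; first by move=> _; exact: v_ge0.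
  exact: v_ge0.
apply: closedI.
  apply: closed_bigI => x _; apply: closed_comp; last exact: closed_ge.
  by move=> v _; exact: coord_continuous.
apply: closed_comp; last exact: closed_eq.
move=> v _; apply: cvg_big; [exact: add_continuous | exact: nbhs_filter |].
by move=> x _; exact: coord_continuous.
Qed.

Lemma simplex_compact : compact (@simplex R m).
Proof.
apply: (subclosed_compact simplex_closed (rV_compact (fun _ => @segment_compact R 0 1))).
move=> v [v_ge0 v_sum] x /=; rewrite in_itv /= v_ge0 -v_sum (bigD1 x) //= lerDl.
by apply: sumr_ge0 => y _; exact: v_ge0.
Qed.

Lemma simplex_nonempty : (0 < m)%N -> (@simplex R m) !=set0.
Proof.
move=> m_gt0; exists (const_mx m%:R^-1); split => [x|].
  by rewrite mxE invr_ge0 ler0n.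
under eq_bigr do rewrite mxE.
by rewrite sumr_const card_ord -[LHS]mulr_natr mulVf // pnatr_eq0 -lt0n.
Qed.

Lemma neq_rV_eq_sum_coord [v w : 'rV[R]_m] (x0 : 'I_m) :
  \sum_x v ord0 x = \sum_x w ord0 x -> v != w ->
  exists2 x, x != x0 & v ord0 x != w ord0 x.
Proof.
move=> sum_eq; apply: contraNP => vw_off; apply/eqP/matrixP => i x.
rewrite (ord1 i); have [->|x_neq] := eqVneq x x0; last first.
  by have [//|vw] := eqVneq (v ord0 x) (w ord0 x); case: vw_off; exists x.
move: sum_eq; rewrite (bigD1 x0) //= [RHS](bigD1 x0) //=.
rewrite (eq_bigr (fun x => w ord0 x)); first exact: addIr.
move=> y y_neq; have [//|vw] := eqVneq (v ord0 y) (w ord0 y).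
by case: vw_off; exists y.
Qed.

End Simplex.

Section Game.
Context {R : realType} {n m : nat}.
Variables (u : 'I_m -> R -> R) (c : 'rV[R]_m -> R).
Implicit Types (S : profile R n m) (i : 'I_n) (x : 'I_m) (v w : 'rV[R]_m).

Definition others S i x : R := \sum_(j < n | j != i) S j ord0 x.

Definition revenues S i w : R := \sum_x revenue (u x) (others S i x) (w ord0 x).

Lemma payoff_deviate S i w : payoff u c (deviate S i w) i = revenues S i w - c w.
Proof.
have dev_i : deviate S i w i = w by rewrite /deviate eqxx.
rewrite /payoff dev_i; congr (_ - _); apply: eq_bigr => x _.
rewrite /load (bigD1 i) //= dev_i addrC /revenue /others.
by rewrite (eq_bigr (fun j => S j ord0 x)) // => j /negbTE ji; rewrite /deviate ji.
Qed.

Lemma others_ge0 S i x : is_profile S -> 0 <= others S i x.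
Proof. by move=> S_prof; apply: sumr_ge0 => j _; case: (S_prof j) => + _; apply. Qed.

Hypothesis u0 : forall x, u x 0 = 0.
Hypothesis u_concave : forall x, concave_on nonneg_half (u x).
Hypothesis u_derivable : forall x s, 0 < s -> derivable (u x) s 1.
Hypothesis c_convex : convex_on_rV (@simplex R m) c.

Lemma revenue_others_concave [S i x v w t] : is_profile S ->
  simplex v -> simplex w -> 0 <= t <= 1 ->
  t * revenue (u x) (others S i x) (v ord0 x) +
  (1 - t) * revenue (u x) (others S i x) (w ord0 x) <=
  revenue (u x) (others S i x) ((t *: v + (1 - t) *: w) ord0 x).
Proof.
move=> S_prof [v_ge0 _] [w_ge0 _] t01; rewrite !mxE.
by apply: revenue_concave; rewrite ?others_ge0 //; exact: u_derivable.
Qed.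

Lemma revenues_concave [S] i : is_profile S -> concave_on_rV (@simplex R m) (revenues S i).
Proof.
move=> S_prof v w t sv sw t01; rewrite /revenues !mulr_sumr -big_split /=.
by apply: ler_sum => x _; exact: revenue_others_concave.
Qed.

Lemma payoff_deviate_concave [S] i : is_profile S ->
  concave_on_rV (@simplex R m) (fun w => payoff u c (deviate S i w) i).
Proof.
move=> S_prof v w t sv sw t01; rewrite !payoff_deviate.
have := c_convex v w t sv sw t01; have := revenues_concave i S_prof v w t sv sw t01; lra.
Qed.

Lemma revenues_strictly_concave [S] i [x0] : is_profile S ->
  (forall x, x != x0 -> strictly_concave_on nonneg_half (u x)) ->
  strictly_concave_on_rV (@simplex R m) (revenues S i).
Proof.
move=> S_prof u_sconcave v w t sv sw vw t01.
have t01W : 0 <= t <= 1 by case/andP: t01 => *; rewrite !ltW.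
have [x x_neq vw_x] := neq_rV_eq_sum_coord x0 (etrans sv.2 (esym sw.2)) vw.
rewrite /revenues !mulr_sumr -big_split /= (bigD1 x) //= [ltRHS](bigD1 x) //=.
apply: ltr_leD; last by apply: ler_sum => y _; exact: revenue_others_concave.
case: sv sw => [v_ge0 _] [w_ge0 _]; rewrite !mxE.
apply: revenue_strictly_concave; rewrite ?others_ge0 //.
  exact: u_derivable.
exact: u_sconcave.
Qed.

Lemma payoff_deviate_strictly_concave [S] i : is_profile S ->
  (exists x0, forall x, x != x0 -> strictly_concave_on nonneg_half (u x)) \/
    strictly_convex_on_rV (@simplex R m) c ->
  strictly_concave_on_rV (@simplex R m) (fun w => payoff u c (deviate S i w) i).
Proof.
move=> S_prof strictness v w t sv sw vw t01; rewrite !payoff_deviate.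
have t01W : 0 <= t <= 1 by case/andP: t01 => *; rewrite !ltW.
case: strictness => [[x0 u_sconcave]|c_sconvex].
  have := c_convex v w t sv sw t01W.
  by have := revenues_strictly_concave i S_prof u_sconcave v w t sv sw vw t01; lra.
have := c_sconvex v w t sv sw vw t01.
by have := revenues_concave i S_prof v w t sv sw t01W; lra.
Qed.

Lemma nash_is_strict S :
  (exists x0, forall x, x != x0 -> strictly_concave_on nonneg_half (u x)) \/
    strictly_convex_on_rV (@simplex R m) c ->
  is_nash u c S -> is_strict_nash u c S.
Proof.
move=> strictness [S_prof S_best]; split => // i s [ss s_best].
have [sSi Si_best] := S_best i.
exact: (strictly_concave_max_unique (@simplex_convex R m)
          (payoff_deviate_strictly_concave i S_prof strictness) ss sSi s_best Si_best).
Qed.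

End Game.

Section Existence.
Context {R : realType} {n m : nat}.
Variables (u : 'I_m -> R -> R) (c : 'rV[R]_m -> R).
Hypothesis u0 : forall x, u x 0 = 0.
Hypothesis u_concave : forall x, concave_on nonneg_half (u x).
Hypothesis u_diff : forall x, differentiable_on_nonneg (u x).
Hypothesis c_convex : convex_on_rV (@simplex R m) c.
Hypothesis c_diff : forall v, @simplex R m v -> differentiable c v.

Let N : R := n%:R.

Definition symmetric_potential (v : 'rV[R]_m) : R :=
  \sum_x potential (u x) N (v ord0 x) - c v.

Lemma others_symmetric (v : 'rV[R]_m) i x :
  others (fun _ : 'I_n => v) i x = (N - 1) * v ord0 x.
Proof.
have : \sum_(j < n) v ord0 x = v ord0 x + others (fun=> v) i x by rewrite (bigD1 i).
by rewrite sumr_const card_ord -mulr_natl mulrBl mul1r => ->; rewrite addrC addKr.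
Qed.

Lemma symmetric_potential_continuous : (0 < n)%N ->
  {within @simplex R m, continuous symmetric_potential}.
Proof.
move=> n_gt0; apply: continuous_in_subspaceT => v; rewrite inE => sv.
have c_cont : c @ v --> c v by apply/differentiable_continuous; exact: c_diff.
apply: cvgB c_cont; apply: cvg_big => //; first exact: add_continuous.
move=> x _; apply: continuous_comp; first exact: coord_continuous.
apply: potential_continuous; rewrite ?ltr0n //.
- exact: (u_diff x).1.
- exact: (u_diff x).2.
- exact: sv.1.
Qed.

Lemma symmetric_potential_max_nash v : simplex v ->
  (forall w, simplex w -> symmetric_potential w <= symmetric_potential v) ->
  is_nash u c (fun _ : 'I_n => v).
Proof.
move=> sv v_max; split => // i; split => // w sw.
have N_ge1 : 1 <= N by rewrite ler1n (leq_ltn_trans (leq0n i) (ltn_ord i)).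
have u_der x := (u_diff x).1.
apply: (concave_max_first_order (g := symmetric_potential)
  (payoff_deviate_concave u c u0 u_concave u_der c_convex i (fun=> sv)) sv sw).
  move=> t /andP[t_gt0 t_le1]; apply/v_max/simplex_convex => //.
  by rewrite ltW.
have vd_ge0 x : 0 <= v ord0 x + (w ord0 x - v ord0 x).
  by rewrite addrC subrK; exact: sw.1.
have quot_cvg := @cvg_big _ _ +%R 0 predT add_continuous _ 0^'+ (index_enum 'I_m) _ _ _
  (fun x _ => revenue_sub_potential_rquot_cvg _ (u0 x) (u_der x) (u_diff x).2
     (w ord0 x - v ord0 x) N_ge1 (sv.1 x) (vd_ge0 x)).
rewrite big1 // in quot_cvg; apply: (cvg_trans _ (quot_cvg _)).
apply: near_eq_cvg; near=> t.
rewrite !payoff_deviate /revenues /symmetric_potential.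
set cz := c _; set cv := c v.
rewrite (_ : forall a b d e : R, a - cz - (b - cv) - (d - cz - (e - cv)) = a - b - (d - e));
  last by move=> *; ring.
rewrite -!sumrB mulr_sumr; apply: eq_bigr => x _; rewrite others_symmetric !mxE.
rewrite (_ : t * w ord0 x + (1 - t) * v ord0 x = v ord0 x + t * (w ord0 x - v ord0 x)) //.
by ring.
Unshelve. all: by end_near.
Qed.

Lemma nash_exists : (0 < m)%N -> exists S : profile R n m, is_nash u c S.
Proof.
move=> m_gt0; have [n0|n_gt0] := posnP n.
  by exists (fun=> 0); split => i; have := ltn_ord i; rewrite [X in (_ < X)%N]n0.
have [v sv v_max] := EVT_max_rV (simplex_nonempty m_gt0) simplex_compact
  (symmetric_potential_continuous n_gt0).
exists (fun=> v); apply: symmetric_potential_max_nash; first by rewrite inE in sv.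
by move=> w sw; apply: v_max; rewrite inE.
Qed.

End Existence.

Theorem proposition2 (R : realType) (n m : nat) (hm : (0 < m)%N)
  (u : 'I_m -> R -> R) (c : 'rV[R]_m -> R)
  (hu_nonneg : forall x t, 0 <= t -> 0 <= u x t)
  (hu0 : forall x, u x 0 = 0)
  (hu_conc : forall x, concave_on nonneg_half (u x))
  (hu_diff : forall x, differentiable_on_nonneg (u x))
  (hc_nonneg : forall v, simplex v -> 0 <= c v)
  (hc_conv : convex_on_rV (@simplex R m) c)
  (hc_diff : forall v, @simplex R m v -> differentiable c v)
  (hstrict : (exists x0 : 'I_m, forall x, x != x0 ->
                 strictly_concave_on nonneg_half (u x))
             \/ strictly_convex_on_rV (@simplex R m) c) :
  (exists S : profile R n m, is_nash u c S) /\
  (forall S : profile R n m, is_nash u c S -> is_strict_nash u c S).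
Proof.
split; first exact: nash_exists.
by move=> S; apply: nash_is_strict => // x; case: (hu_diff x).
Qed.
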